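(* Let $\alpha$ be a countably infinite order type with $\alpha=\omega\alpha'+n$, $n<\omega$. Let $S_\alpha:=\Omega(\alpha')\oplus n$ and $Q_\alpha:=I_{<\omega}(S_\alpha)$. Then $Q_\alpha\in\mathbb{J}_\alpha$, and for every sierpinskisation $S$ of $\alpha$ and $\omega$, $Q_\alpha$ is embeddable in $I_{<\omega}(S)$ by a map preserving finite joins.
   Context: A sierpinskisation of a countable order type $\beta$ and $\omega$ is a poset whose order is the intersection of two linear orders on its underlying set, one of type $\beta$ and one of type $\omega$; equivalently it is obtained from a bijection $\varphi:\mathbb{N}\to C$ onto a chain $C$ of type $\beta$ by setting $x\le y$ iff $x\le y$ in $\mathbb{N}$ and $\varphi(x)\le\varphi(y)$ in $C$. $\omega\alpha'$ is the ordered sum of $\alpha'$ copies of $\omega$, i.e. $\omega\times\alpha'$ ordered lexicographically with the $\alpha'$-coordinate dominant. A sierpinskisation of $\omega\alpha'$ and $\omega$ is monotonic if it comes from a bijection $\varphi:\mathbb{N}\to\omega\alpha'$ such that $\varphi^{-1}$ is order-preserving on each subset $\omega\times\{\beta\}$, $\beta\in\alpha'$; $\Omega(\alpha')$ denotes a monotonic sierpinskisation of $\omega\alpha'$ and $\omega$ (any two such embed in each other). $n$ denotes the $n$-element chain and $\oplus$ the direct sum (disjoint union, elements from different parts incomparable). $I_{<\omega}(S)$ is the set of finitely generated initial segments of $S$ ordered by inclusion. $\mathbb{J}_\alpha$ is the class of join-semilattices $P$ with a least element whose lattice $J(P)$ of ideals (non-empty up-directed initial segments, ordered by inclusion) contains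 a chain of type $I(\alpha)$, the type of the chain of all initial segments of a chain of type $\alpha$. A map preserves finite joins if $f(\bigvee X)=\bigvee f(X)$ for all finite $X$. *)

From mathcomp Require Import all_boot.
Set Implicit Arguments. Unset Strict Implicit. Unset Printing Implicit Defensive.

Definition partial_order {T : Type} (le : T -> T -> Prop) : Prop :=
  (forall x, le x x) /\
  (forall x y, le x y -> le y x -> x = y) /\
  (forall x y z, le x y -> le y z -> le x z).

Definition linear_order {T : Type} (le : T -> T -> Prop) : Prop :=
  partial_order le /\ (forall x y, le x y \/ le y x).

Definition order_iso {A C : Type} (leA : A -> A -> Prop) (leC : C -> C -> Prop)
  (h : A -> C) : Prop :=
  bijective h /\ (forall a a', leA a a' <-> leC (h a) (h a')).

Definition order_embedding {A C : Type} (leA : A -> A -> Prop) (leC : C -> C -> Prop)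
  (f : A -> C) : Prop :=
  forall a a', leA a a' <-> leC (f a) (f a').

Definition is_lub {T : Type} (le : T -> T -> Prop) (P : T -> Prop) (j : T) : Prop :=
  (forall x, P x -> le x j) /\ (forall u, (forall x, P x -> le x u) -> le j u).

(** [f] preserves finite joins: f (\/ X) = \/ f(X) for every finite X
    (X given as the range of a finite family, possibly empty). *)
Definition preserves_finite_joins {A C : Type} (leA : A -> A -> Prop)
  (leC : C -> C -> Prop) (f : A -> C) : Prop :=
  forall (k : nat) (g : 'I_k -> A) (j : A),
    is_lub leA (fun x => exists i, x = g i) j ->
    is_lub leC (fun y => exists i, y = f (g i)) (f j).

(** omega * B : lexicographic product, the B-coordinate dominant. *)
Definition lex_le {B : Type} (leB : B -> B -> Prop) (x y : nat * B) : Prop :=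
  (leB x.2 y.2 /\ x.2 <> y.2) \/ (x.2 = y.2 /\ (x.1 <= y.1)%N).

(** The ordered sum omega*B + n (every element of n above omega*B). *)
Definition osum_le {B : Type} (leB : B -> B -> Prop) (n : nat)
  (x y : (nat * B) + 'I_n) : Prop :=
  match x, y with
  | inl a, inl b => lex_le leB a b
  | inl _, inr _ => True
  | inr _, inl _ => False
  | inr i, inr j => (i <= j)%N
  end.
Arguments osum_le {B} leB n x y.

Definition dsum_le {X Y : Type} (leX : X -> X -> Prop) (leY : Y -> Y -> Prop)
  (u v : X + Y) : Prop :=
  match u, v with
  | inl a, inl b => leX a b
  | inr a, inr b => leY a b
  | _, _ => False
  end.

Definition nchain_le (n : nat) (i j : 'I_n) : Prop := (i <= j)%N.
Arguments nchain_le n i j : clear implicits.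

(** The sierpinskisation of (C, leC) and omega given by a bijection
    phi : N -> C: on N, x <= y iff x <= y in N and phi x <= phi y in C. *)
Definition sier_le {C : Type} (leC : C -> C -> Prop) (phi : nat -> C)
  (x y : nat) : Prop := (x <= y)%N /\ leC (phi x) (phi y).

(** phi : N -> omega*B is a bijection whose inverse is order preserving on
    each fibre omega x {beta}. *)
Definition monotonic_bij {B : Type} (phi : nat -> nat * B) : Prop :=
  bijective phi /\
  (forall x y, (phi x).2 = (phi y).2 -> ((phi x).1 <= (phi y).1)%N -> (x <= y)%N).

Definition Omega_le {B : Type} (leB : B -> B -> Prop) (phi : nat -> nat * B) :=
  sier_le (lex_le leB) phi.

Definition S_le {B : Type} (leB : B -> B -> Prop) (phi : nat -> nat * B) (n : nat) :
  nat + 'I_n -> nat + 'I_n -> Prop :=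
  dsum_le (Omega_le leB phi) (nchain_le n).
Arguments S_le {B} leB phi n _ _.

Definition fg_init {T : Type} (le : T -> T -> Prop) (X : T -> Prop) : Prop :=
  exists (k : nat) (g : 'I_k -> T), forall x, X x <-> exists i, le x (g i).

Definition Ifin {T : Type} (le : T -> T -> Prop) : Type :=
  {X : T -> Prop | fg_init le X}.

Definition Ifin_le {T : Type} (le : T -> T -> Prop) (X Y : Ifin le) : Prop :=
  forall x, sval X x -> sval Y x.
Arguments Ifin_le {T} le X Y.

Definition is_ideal {T : Type} (le : T -> T -> Prop) (I : T -> Prop) : Prop :=
  (exists x, I x) /\
  (forall x y, le x y -> I y -> I x) /\
  (forall x y, I x -> I y -> exists z, I z /\ le x z /\ le y z).

Definition is_initial {A : Type} (leA : A -> A -> Prop) (X : A -> Prop) : Prop :=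
  forall x y, leA x y -> X y -> X x.

Definition Iseg {A : Type} (leA : A -> A -> Prop) : Type :=
  {X : A -> Prop | is_initial leA X}.

Definition Iseg_le {A : Type} (leA : A -> A -> Prop) (X Y : Iseg leA) : Prop :=
  forall x, sval X x -> sval Y x.

(** The lattice J(P) of ideals of P contains a chain of type I(A):
    an order embedding of I(A) into (J(P), inclusion). *)
Definition J_contains_I {T A : Type} (le : T -> T -> Prop) (leA : A -> A -> Prop) : Prop :=
  exists g : Iseg leA -> (T -> Prop),
    (forall X, is_ideal le (g X)) /\
    (forall X Y, Iseg_le X Y <-> (forall t, g X t -> g Y t)).

Definition in_J {T A : Type} (le : T -> T -> Prop) (leA : A -> A -> Prop) : Prop :=
  partial_order le /\
  (forall x y, exists j, is_lub le (fun z => z = x \/ z = y) j) /\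
  (exists b, forall x, le b x) /\
  J_contains_I le leA.

From mathcomp Require Import all_boot.
From Stdlib Require Import FunctionalExtensionality PropExtensionality ProofIrrelevance IndefiniteDescription.

Set Implicit Arguments. Unset Strict Implicit. Unset Printing Implicit Defensive.

(* Pulling back the initial segments of alpha along the monotone bijection
   S_alpha -> omega alpha' + n, an initial segment X of alpha gives the ideal of those
   finitely generated segments of S_alpha that lie over X; these ideals form a chain of type
   I(alpha) in J(Q_alpha).
   For the embedding, transport the sierpinskisation S along the isomorphism alpha ~
   omega alpha' + n, so that S is N ordered by x <= y and t x <= t y for a bijection t.
   Copy Omega(alpha') into S greedily: its a-th point is the index of a point of the fibre of
   (phi a).2 whose height is so large that the indices increase; the monotonicity of phi^-1 on
   fibres then makes this copy an order embedding. The chain n goes to its own indices, all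
   below the copy. Mapping a finitely generated segment to the downward closure of the image
   of its points preserves unions and reflects inclusion. *)

Section FinitelyGeneratedSegments.
Variables (T : Type) (le : T -> T -> Prop).

Lemma fg_init_fin (F : finType) (g : F -> T) (X : T -> Prop) :
  (forall x, X x <-> exists i, le x (g i)) -> fg_init le X.
Proof.
move=> HX; exists #|F|, (fun i => g (enum_val i)) => x; split.
  by move/HX=> [i Hi]; exists (enum_rank i); rewrite enum_rankK.
by move=> [i Hi]; apply/HX; exists (enum_val i).
Qed.

Lemma fg_init_sig (X : T -> Prop) : fg_init le X ->
  {k : nat & {g : 'I_k -> T | forall x, X x <-> exists i, le x (g i)}}.
Proof.
move=> /constructive_indefinite_description [k /constructive_indefinite_description gk].
by exists k.
Qed.

Lemma fg_init0 : fg_init le (fun _ => False).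
Proof. by apply: (@fg_init_fin void (fun v => match v with end)) => x; split=> // [[]]. Qed.

Lemma fg_init1 (s : T) : fg_init le (fun x => le x s).
Proof. by apply: (@fg_init_fin unit (fun _ => s)) => x; split=> [|[]]; first exists tt. Qed.

Lemma fg_initU (X Y : T -> Prop) :
  fg_init le X -> fg_init le Y -> fg_init le (fun x => X x \/ Y x).
Proof.
move=> [k1 [g1 H1]] [k2 [g2 H2]].
apply: (@fg_init_fin ('I_k1 + 'I_k2)%type (fun s => match s with inl i => g1 i | inr j => g2 j end)).
move=> x; split.
- by case=> [/H1 [i Hi]|/H2 [i Hi]]; [exists (inl i)|exists (inr i)].
- by case=> [[i|i] Hi]; [left; apply/H1|right; apply/H2]; exists i.
Qed.

Lemma fg_init_bigU (k : nat) (X : 'I_k -> T -> Prop) :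
  (forall i, fg_init le (X i)) -> fg_init le (fun x => exists i, X i x).
Proof.
move=> /(fun fgX i => fg_init_sig (fgX i)) G.
apply: (@fg_init_fin {i : 'I_k & 'I_(projT1 (G i))}
                     (fun p => sval (projT2 (G (tag p))) (tagged p))) => x; split.
  by move=> [i /(svalP (projT2 (G i))) [j Hj]]; exists (Tagged (fun i => 'I_(projT1 (G i))) j).
by move=> [[i j] /= Hj]; exists i; apply/(svalP (projT2 (G i))); exists j.
Qed.

Lemma fg_init_initial (X : T -> Prop) :
  (forall x y z, le x y -> le y z -> le x z) ->
  fg_init le X -> forall x y, le x y -> X y -> X x.
Proof. by move=> le_trans [k [g Hg]] x y Hxy /Hg [i Hi]; apply/Hg; exists i; apply: le_trans Hi. Qed.

Lemma Ifin_partial_order : partial_order (Ifin_le le).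
Proof.
split=> [X x //|]; split=> [[X HX] [Y HY] /= XY YX|X Y Z XY YZ x /XY /YZ //].
have E : X = Y.
  by apply: functional_extensionality => x; apply: propositional_extensionality; split=> [/XY|/YX].
by subst Y; rewrite (proof_irrelevance _ HX HY).
Qed.

Lemma Ifin_lub2 (X Y : Ifin le) :
  exists j, is_lub (Ifin_le le) (fun Z => Z = X \/ Z = Y) j.
Proof.
exists (exist _ _ (fg_initU (svalP X) (svalP Y))); split.
  by move=> Z [->|->] x Hx /=; [left|right].
by move=> U HU x [Hx|Hx]; [apply: (HU X (or_introl erefl))|apply: (HU Y (or_intror erefl))].
Qed.

Lemma Ifin_lub_bigU (k : nat) (g : 'I_k -> Ifin le) (j : Ifin le) :
  is_lub (Ifin_le le) (fun Z => exists i, Z = g i) j ->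
  forall x, sval j x <-> exists i, sval (g i) x.
Proof.
move=> [j_ub j_least] x; split; last by move=> [i Hi]; apply: (j_ub (g i)) => //; exists i.
pose U := exist _ _ (fg_init_bigU (fun i => svalP (g i))) : Ifin le.
by apply: (j_least U) => Z [i ->] y Hy; exists i.
Qed.

End FinitelyGeneratedSegments.

Section IdealChain.
Variables (S A : Type) (leS : S -> S -> Prop) (leA : A -> A -> Prop) (k : S -> A).
Hypotheses (leS_refl : forall s, leS s s)
           (k_mono : forall s s', leS s s' -> leA (k s) (k s'))
           (k_surj : forall a, exists s, k s = a).

Definition seg_ideal (X : Iseg leA) (Y : Ifin leS) : Prop :=
  forall s, sval Y s -> sval X (k s).

Lemma seg_ideal_is_ideal X : is_ideal (Ifin_le leS) (seg_ideal X).
Proof.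
split; first by exists (exist _ _ (fg_init0 leS)).
split=> [Y Z YZ HZ s /YZ /HZ //|Y Z HY HZ].
exists (exist _ _ (fg_initU (svalP Y) (svalP Z))).
by split=> [s [/HY|/HZ] //|]; split=> s Hs /=; [left|right].
Qed.

Lemma seg_ideal_le X X' :
  Iseg_le X X' <-> (forall Y, seg_ideal X Y -> seg_ideal X' Y).
Proof.
split=> [XX' Y HY s /HY /XX' //|HXX' a].
have [s <-] := k_surj a => Xks.
pose Ds := exist _ _ (fg_init1 leS s) : Ifin leS.
have DsX : seg_ideal X Ds by move=> s' /k_mono ks's; exact: (proj2_sig X) ks's Xks.
exact: (HXX' Ds DsX s (leS_refl s)).
Qed.

Lemma in_J_Ifin : in_J (Ifin_le leS) leA.
Proof.
split; first exact: Ifin_partial_order.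
split; first exact: Ifin_lub2.
split; first by exists (exist _ _ (fg_init0 leS)) => Y s.
exists seg_ideal; split=> [|X X']; [exact: seg_ideal_is_ideal|exact: seg_ideal_le].
Qed.

End IdealChain.

Section DownImage.
Variables (S T : Type) (leS : S -> S -> Prop) (leT : T -> T -> Prop) (p : S -> T).
Variables (F : finType) (clip : S -> F -> S).
Hypotheses (leS_refl : forall s, leS s s)
           (leS_trans : forall s1 s2 s3, leS s1 s2 -> leS s2 s3 -> leS s1 s3)
           (leT_refl : forall x, leT x x)
           (leT_trans : forall x1 x2 x3, leT x1 x2 -> leT x2 x3 -> leT x1 x3).
(* [p] need not be monotone (on the chain part of S_alpha it is not); instead, below each [s]
   the image of [p] is dominated by the finitely many points [p (clip s o)]. *)
Hypotheses (clip_le : forall s o, leS (clip s o) s)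
           (clip_dominates : forall s s', leS s' s -> exists o, leT (p s') (p (clip s o))).

Definition down_image (Y : S -> Prop) (x : T) : Prop := exists2 s, Y s & leT x (p s).

Lemma fg_init_down_image Y : fg_init leS Y -> fg_init leT (down_image Y).
Proof.
move=> fgY; have [k [g Hg]] := fgY.
apply: (@fg_init_fin _ _ ('I_k * F)%type (fun io => p (clip (g io.1) io.2))) => x; split.
  move=> [s /Hg [i si] xs]; have [o so] := clip_dominates si.
  by exists (i, o); apply: leT_trans xs so.
move=> [[i o] /= x_le]; exists (clip (g i) o) => //.
by apply: (fg_init_initial leS_trans fgY (clip_le _ o)); apply/Hg; exists i.
Qed.

Definition Ifin_image (Y : Ifin leS) : Ifin leT :=
  exist _ _ (fg_init_down_image (svalP Y)).

Lemma Ifin_image_mono Y Z : Ifin_le leS Y Z -> Ifin_le leT (Ifin_image Y) (Ifin_image Z).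
Proof. by move=> YZ x [s /YZ Zs xs]; exists s. Qed.

Lemma Ifin_image_joins : preserves_finite_joins (Ifin_le leS) (Ifin_le leT) Ifin_image.
Proof.
move=> k g j j_lub; split=> [_ [i ->]|U U_ub x [s /(Ifin_lub_bigU j_lub) [i gis] xs]].
  by apply: Ifin_image_mono; apply: (proj1 j_lub); exists i.
by apply: (U_ub (Ifin_image (g i))); [exists i | exists s].
Qed.

Hypothesis p_reflect : forall s s', leT (p s) (p s') -> leS s s'.

Lemma Ifin_image_embedding : order_embedding (Ifin_le leS) (Ifin_le leT) Ifin_image.
Proof.
move=> Y Z; split=> [|YZ s Ys]; first exact: Ifin_image_mono.
have [s' Zs' /p_reflect ss'] := YZ (p s) (ex_intro2 _ _ s Ys (leT_refl (p s))).
exact: (fg_init_initial leS_trans (svalP Z) ss').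
Qed.

End DownImage.

Section Orders.
Variables (B : Type) (leB : B -> B -> Prop) (n : nat).
Hypothesis leB_po : partial_order leB.

Lemma lex_le_refl x : lex_le leB x x.
Proof. by right. Qed.

Lemma lex_le_trans x y z : lex_le leB x y -> lex_le leB y z -> lex_le leB x z.
Proof.
case: leB_po => _ [leB_anti leB_trans].
rewrite /lex_le => -[[xy nxy]|[-> xy]] [[yz nyz]|[<- yz]]; [left|by left|by left|right].
- split=> [|exz]; first exact: leB_trans yz.
  by apply: nxy; apply: leB_anti => //; rewrite exz.
- by split=> //; apply: leq_trans yz.
Qed.

Lemma osum_le_refl x : osum_le leB n x x.
Proof. by case: x => [a|i] /=; [apply: lex_le_refl|]. Qed.

Lemma osum_le_trans x y z : osum_le leB n x y -> osum_le leB n y z -> osum_le leB n x z.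
Proof. by case: x y z => [a|i] [b|j] [c|l] //=; [apply: lex_le_trans|apply: leq_trans]. Qed.

Lemma S_le_refl (phi : nat -> nat * B) s : S_le leB phi n s s.
Proof. by case: s => [a|i] /=; [split=> //; apply: lex_le_refl|apply: leqnn]. Qed.

Lemma S_le_trans (phi : nat -> nat * B) s1 s2 s3 :
  S_le leB phi n s1 s2 -> S_le leB phi n s2 s3 -> S_le leB phi n s1 s3.
Proof.
case: s1 s2 s3 => [a|i] [b|j] [c|l] //=; last exact: leq_trans.
by move=> [ab phi_ab] [bc phi_bc]; split; [apply: leq_trans bc|apply: lex_le_trans phi_bc].
Qed.

End Orders.

Lemma sier_le_refl (C : Type) (leC : C -> C -> Prop) (phi : nat -> C) x :
  leC (phi x) (phi x) -> sier_le leC phi x x.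
Proof. by split. Qed.

Lemma sier_le_trans (C : Type) (leC : C -> C -> Prop) (phi : nat -> C) :
  (forall c1 c2 c3, leC c1 c2 -> leC c2 c3 -> leC c1 c3) ->
  forall x y z, sier_le leC phi x y -> sier_le leC phi y z -> sier_le leC phi x z.
Proof. by move=> leC_trans x y z [xy Cxy] [yz Cyz]; split; [apply: leq_trans yz|apply: leC_trans Cyz]. Qed.

Lemma sier_le_iso (A C : Type) (leA : A -> A -> Prop) (leC : C -> C -> Prop)
    (h : A -> C) (psi : nat -> A) :
  order_embedding leA leC h -> sier_le leA psi = sier_le leC (h \o psi).
Proof.
move=> h_emb; apply: functional_extensionality => x; apply: functional_extensionality => y.
by apply: propositional_extensionality; rewrite /sier_le h_emb.
Qed.

Section OmegaCopy.
Variables (B : Type) (leB : B -> B -> Prop) (n : nat).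
Variables (t : nat -> (nat * B) + 'I_n) (ti : (nat * B) + 'I_n -> nat) (M : nat).
Hypothesis tiK : cancel ti t.
Variable phi : nat -> nat * B.
Hypothesis phi_mono : forall x y, (phi x).2 = (phi y).2 -> (phi x).1 <= (phi y).1 -> x <= y.

Definition height (y : (nat * B) + 'I_n) : nat := if y is inl q then q.1 else 0.

Definition height_bound (K : nat) : nat := \max_(x < K) (height (t x)).+1.

Lemma height_bound_mono : {homo height_bound : K K' / K <= K'}.
Proof.
move=> K K' KK'; apply/bigmax_leqP => x _.
exact: (@leq_bigmax _ (fun x : 'I_K' => (height (t x)).+1) (widen_ord KK' x)).
Qed.

Lemma height_bound_index (K q : nat) (b : B) : height_bound K <= q -> K <= ti (inl (q, b)).
Proof.
rewrite leqNgt; apply: contraNT; rewrite -ltnNge => lt_index.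
have := @leq_bigmax _ (fun x : 'I_K => (height (t x)).+1) (Ordinal lt_index).
by rewrite /= tiK.
Qed.

(* The [a]-th point of the copy of Omega sits on fibre [(phi a).2] of [t], beyond everything
   indexed below [copy_floor a], so the copy is increasing in [N] and in height. *)
Fixpoint copy_floor (a : nat) : nat :=
  if a is a'.+1 then (ti (inl (height_bound (copy_floor a'), (phi a').2))).+1 else M.

Definition copy (a : nat) : nat := ti (inl (height_bound (copy_floor a), (phi a).2)).

Lemma t_copy a : t (copy a) = inl (height_bound (copy_floor a), (phi a).2).
Proof. exact: tiK. Qed.

Lemma copy_floor_le a : copy_floor a <= copy a.
Proof. exact: height_bound_index. Qed.

Lemma copy_floor_mono : {homo copy_floor : a b / a <= b}.
Proof. by apply: homo_leq leq_trans _ => [//|a]; apply: leqW (copy_floor_le a). Qed.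

Lemma copy_lt a b : a < b -> copy a < copy b.
Proof. by move=> ab; apply: leq_trans (copy_floor_le b); exact: (copy_floor_mono ab). Qed.

Lemma copy_ge a : M <= copy a.
Proof. exact: leq_trans (copy_floor_mono (leq0n a)) (copy_floor_le a). Qed.

Lemma copy_le a b : Omega_le leB phi a b <-> sier_le (osum_le leB n) t (copy a) (copy b).
Proof.
rewrite /Omega_le /sier_le /= !t_copy /lex_le /=; split=> [[ab phi_ab]|[cab t_ab]].
  split; first by move: ab; rewrite leq_eqVlt => /predU1P [->//|/copy_lt/ltnW].
  case: phi_ab => [//|[-> _]]; first by left.
  by right; split=> //; apply/height_bound_mono/copy_floor_mono.
have ab : a <= b.
  by rewrite leqNgt; apply: contraTN cab => /copy_lt; rewrite -ltnNge.
split=> //; case: t_ab => [//|[fibre _]]; first by left.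
right; split=> //; case: (leqP (phi a).1 (phi b).1) => // lt_ba.
have ba := phi_mono (esym fibre) (ltnW lt_ba).
have eab : a = b by apply/eqP; rewrite eqn_leq ab ba.
by move: lt_ba; rewrite eab ltnn.
Qed.

End OmegaCopy.

Section SEmbedding.
Variables (B : Type) (leB : B -> B -> Prop) (n : nat) (phi : nat -> nat * B).
Variables (t : nat -> (nat * B) + 'I_n) (ti : (nat * B) + 'I_n -> nat).
Hypotheses (leB_po : partial_order leB) (phi_mono : monotonic_bij phi) (tiK : cancel ti t).

Local Notation leS := (S_le leB phi n).
Local Notation leT := (sier_le (osum_le leB n) t).

(* Above all points of the chain part, so that no copy point lies below a chain point. *)
Let M := (\max_(i < n) ti (inr i)).+1.

Definition S_point (s : nat + 'I_n) : nat :=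
  match s with inl a => copy t ti M phi a | inr i => ti (inr i) end.

Definition S_clip (s : nat + 'I_n) (o : option 'I_n) : nat + 'I_n :=
  match s, o with
  | inr j, Some l => if l <= j then inr l else inr j
  | _, _ => s
  end.

Lemma S_clip_le s o : leS (S_clip s o) s.
Proof.
case: s o => [a|j] [l|]; try exact: S_le_refl.
by rewrite /S_clip; case: ifP => [lj|_]; [apply: lj|apply: S_le_refl].
Qed.

Lemma S_clip_dominates s s' : leS s' s -> exists o, leT (S_point s') (S_point (S_clip s o)).
Proof.
case: s s' => [a|j] [b|l] //= le_s's.
  by exists None; apply/(copy_le leB M tiK (proj2 phi_mono)).
exists (Some l); rewrite /= le_s's /=.
by apply: sier_le_refl; apply: osum_le_refl.
Qed.

Lemma S_point_reflect s s' : leT (S_point s) (S_point s') -> leS s s'.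
Proof.
case: s s' => [a|i] [b|j] /=.
- exact: (copy_le leB M tiK (proj2 phi_mono) a b).2.
- move=> [le_copy _]; have := leq_trans (copy_ge M tiK phi a) le_copy.
  by rewrite ltn_geF // ltnS (@leq_bigmax _ (fun i => ti (inr i)) j).
- by move=> [_]; rewrite tiK t_copy.
- by move=> [_]; rewrite !tiK.
Qed.

Lemma S_embeds_in_sier :
  exists f : Ifin leS -> Ifin leT,
    order_embedding (Ifin_le leS) (Ifin_le leT) f /\
    preserves_finite_joins (Ifin_le leS) (Ifin_le leT) f.
Proof.
have leS_refl s : leS s s by apply: S_le_refl.
have leS_trans s1 s2 s3 : leS s1 s2 -> leS s2 s3 -> leS s1 s3 by apply: S_le_trans.
have leT_refl x : leT x x by apply: sier_le_refl; apply: osum_le_refl.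
have leT_trans x1 x2 x3 : leT x1 x2 -> leT x2 x3 -> leT x1 x3.
  by apply: sier_le_trans; apply: osum_le_trans.
exists (Ifin_image leS_refl leS_trans leT_trans S_clip_le S_clip_dominates).
split; first exact: Ifin_image_embedding S_point_reflect.
exact: Ifin_image_joins.
Qed.

End SEmbedding.

Definition S_to_osum (B : Type) (n : nat) (phi : nat -> nat * B) (s : nat + 'I_n) :
    (nat * B) + 'I_n :=
  match s with inl a => inl (phi a) | inr i => inr i end.

Lemma S_to_osum_mono (B : Type) (leB : B -> B -> Prop) (n : nat) (phi : nat -> nat * B) s s' :
  S_le leB phi n s s' -> osum_le leB n (S_to_osum phi s) (S_to_osum phi s').
Proof. by case: s s' => [a|i] [b|j] //= [_]. Qed.

Lemma S_to_osum_surj (B : Type) (n : nat) (phi : nat -> nat * B) :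
  bijective phi -> forall y : (nat * B) + 'I_n, exists s, S_to_osum phi s = y.
Proof. by move=> [phinv _ phiK] [q|i]; [exists (inl (phinv q)); rewrite /= phiK|exists (inr i)]. Qed.

Theorem lemma2p8 (A B : Type) (leA : A -> A -> Prop) (leB : B -> B -> Prop) (n : nat)
  (hA : linear_order leA) (hB : linear_order leB)
  (hcount : exists e : nat -> A, bijective e)
  (hiso : exists h : A -> (nat * B) + 'I_n, order_iso leA (osum_le leB n) h)
  (phi : nat -> nat * B) (hphi : monotonic_bij phi) :
  in_J (Ifin_le (S_le leB phi n)) leA /\
  (forall psi : nat -> A, bijective psi ->
     exists f : Ifin (S_le leB phi n) -> Ifin (sier_le leA psi),
       order_embedding (Ifin_le (S_le leB phi n)) (Ifin_le (sier_le leA psi)) f /\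
       preserves_finite_joins (Ifin_le (S_le leB phi n)) (Ifin_le (sier_le leA psi)) f).
Proof.
have [h [[hinv hK hKinv] h_le]] := hiso.
split.
  apply: (@in_J_Ifin _ _ _ _ (hinv \o S_to_osum phi)) => [s|s s' ss'|a].
  - exact: S_le_refl.
  - by apply/h_le; rewrite /= !hKinv; apply: S_to_osum_mono.
  - have [s hs] := S_to_osum_surj (proj1 hphi) (h a).
    by exists s; rewrite /= hs hK.
move=> psi [psinv _ psiK]; rewrite (sier_le_iso psi h_le).
apply: (@S_embeds_in_sier _ _ _ _ _ (psinv \o hinv)) => [||y].
- by case: hB.
- exact: hphi.
- by rewrite /= psiK hKinv.
Qed.
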